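(* Let $(X_n,F_n)_{n\ge1}$ be a process where each $X_n$ is an $\mathbb X$-valued random variable and each $F_n$ is a random probability measure on $\mathbb X$. Assume: (i) conditionally on the whole sequence $(F_n)_{n\ge1}$, the $X_n$ are independent and the conditional distribution of $X_n$ is $F_n$; (ii) $(F_n)_{n\ge1}$ is a measure-valued martingale with respect to its natural filtration, i.e. $\mathbb E[F_{n+1}(A)\mid F_1,\dots,F_n]=F_n(A)$ a.s. for every $n\ge1$ and $A\in\mathcal X$. Then $(X_n)_{n\ge1}$ is c.i.d. (with respect to its natural filtration).
   Context: All random elements are defined on a probability space $(\Omega,\mathcal F,\mathbb P)$; $\mathbb X$ is a Polish space with Borel $\sigma$-algebra $\mathcal X$. Spaces of probability measures carry the topology of weak convergence and the $\sigma$-algebra generated by the evaluation maps; a random probability measure is a random element of such a space. A sequence $(X_n)_{n\ge1}$ of $\mathbb X$-valued random variables adapted to a filtration $\mathcal G=(\mathcal G_n)_{n\ge0}$ is $\mathcal G$-c.i.d. (conditionally identically distributed) if $\mathbb E[f(X_{n+k})\mid\mathcal G_n]=\mathbb E[f(X_{n+1})\mid\mathcal G_n]$ a.s. for all $k\ge1$, $n\ge0$ and all bounded measurable $f:\mathbb X\to\mathbb R$; it is c.i.d. if this holds for its natural filtration $\mathcal G_n=\sigma(X_1,\dots,X_n)$, $\mathcal G_0=\{\emptyset,\Omega\}$. *)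

From HB Require Import structures.
From mathcomp Require Import all_boot all_order all_algebra.
From mathcomp Require Import all_classical all_reals all_analysis measurable_realfun.
Set Implicit Arguments.
Unset Strict Implicit.
Unset Printing Implicit Defensive.
Import Order.TTheory GRing.Theory Num.Theory.
Local Open Scope classical_set_scope.
Local Open Scope ring_scope.

Section Polish.
Context {R : realType} {d : measure_display} (X : measurableType d).

Definition is_metric (m : X -> X -> R) : Prop :=
  (forall x y, 0 <= m x y) /\ (forall x y, m x y = 0 <-> x = y) /\
  (forall x y, m x y = m y x) /\ (forall x y z, m x z <= m x y + m y z).

Definition metric_open (m : X -> X -> R) (U : set X) : Prop :=
  forall x, U x -> exists2 e : R, 0 < e & forall y, m x y < e -> U y.

Definition metric_complete (m : X -> X -> R) : Prop :=
  forall u : nat -> X,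
    (forall e : R, 0 < e -> exists N, forall p q, (N <= p)%N -> (N <= q)%N ->
        m (u p) (u q) < e) ->
    exists x, forall e : R, 0 < e -> exists N, forall p, (N <= p)%N -> m (u p) x < e.

Definition metric_separable (m : X -> X -> R) : Prop :=
  exists D : nat -> X, forall x (e : R), 0 < e -> exists i, m x (D i) < e.

Definition polish_borel : Prop :=
  exists m : X -> X -> R,
    [/\ is_metric m, metric_complete m, metric_separable m &
        (@measurable _ X) = <<s metric_open m >>].
End Polish.

Section CondExp.
Context {R : realType} {d : measure_display} {Omega : measurableType d}
        (P : probability Omega R).

Definition is_condexp (G : set (set Omega)) (Z W : Omega -> R) : Prop :=
  [/\ P.-integrable setT (EFin \o Z),
      P.-integrable setT (EFin \o W),
      (forall C : set R, measurable C -> G (W @^-1` C)) &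
      (forall B, G B -> (\int[P]_(x in B) (W x)%:E = \int[P]_(x in B) (Z x)%:E)%E)].

Definition condexp_is (G : set (set Omega)) (Z V : Omega -> R) : Prop :=
  exists W, is_condexp G Z W /\ {ae P, forall x, W x = V x}.

Definition condexp_eq (G : set (set Omega)) (Z1 Z2 : Omega -> R) : Prop :=
  exists W1 W2, [/\ is_condexp G Z1 W1, is_condexp G Z2 W2 &
                   {ae P, forall x, W1 x = W2 x}].
End CondExp.

Section Gen.
Context {R : realType} {d dX : measure_display} {Omega : measurableType d}
        {X : measurableType dX}.

(* sigma(Xs i : i < n)  (0-based indices) *)
Definition sigma_X (Xs : nat -> Omega -> X) (n : nat) : set (set Omega) :=
  <<s [set B | exists i (A : set X), [/\ (i < n)%N, measurable A &
                                          B = Xs i @^-1` A]] >>.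

Definition sigma_F (Fs : nat -> Omega -> probability X R) (I : set nat)
  : set (set Omega) :=
  <<s [set B | exists i (A : set X) (C : set (\bar R)),
        [/\ I i, measurable A, measurable C &
            B = (fun w => Fs i w A) @^-1` C]] >>.

(* c.i.d. (is_cid) with respect to the natural filtration (0-based: X_{m} of the paper
   is Xs (m-1), and G_n = sigma(Xs 0, ..., Xs (n-1))) *)
Definition is_cid (P : probability Omega R) (Xs : nat -> Omega -> X) : Prop :=
  forall (n k : nat) (f : X -> R), (0 < k)%N ->
    measurable_fun setT f -> (exists M : R, forall x, `|f x| <= M) ->
    condexp_eq P (sigma_X Xs n) (f \o Xs (n + k).-1) (f \o Xs n).
End Gen.

(* Let B = {X_0 \in A_0, ..., X_(n-1) \in A_(n-1)} and m >= n. By (i),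
   P(B /\ X_m \in A) = E[F_0(A_0) ... F_(n-1)(A_(n-1)) F_m(A)]; the product in front
   of F_m(A) is measurable with respect to F_0, ..., F_(m-1), so the martingale
   property (ii) replaces F_m(A) by F_(m-1)(A), ..., down to F_n(A). Hence
   P(B /\ X_m \in A) = P(B /\ X_n \in A) on cylinders, then on all of
   sigma(X_0, ..., X_(n-1)) by the pi-lambda theorem. Consequently
   int_B f(X_m) = int_B f(X_n) for bounded measurable f, so a version of
   E[f(X_n) | X_0, ..., X_(n-1)] is also a version of E[f(X_m) | X_0, ..., X_(n-1)]. *)

From HB Require Import structures.
From mathcomp Require Import all_boot all_order all_algebra.
From mathcomp Require Import all_classical all_reals all_analysis measurable_realfun.
Set Implicit Arguments.
Unset Strict Implicit.
Unset Printing Implicit Defensive.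
Import Order.TTheory GRing.Theory Num.Theory.
Local Open Scope classical_set_scope.
Local Open Scope ring_scope.

Lemma norm_le_addr_ge0 {R : realDomainType} (x M : R) : `|x| <= M -> 0 <= x + M.
Proof. by rewrite ler_norml -lerBlDr sub0r => /andP[]. Qed.

Section density.
Local Open Scope ereal_scope.
Context {R : realType} {d : measure_display} {T : measurableType d}
  (P : {finite_measure set T -> \bar R}) (Z : T -> R)
  (Z_ge0 : forall w, (0 <= Z w)%R) (Z_int : P.-integrable setT (EFin \o Z)).

Definition density (A : set T) := \int[P]_(w in A) (Z w)%:E.

Let measurable_Z : measurable_fun setT (EFin \o Z).
Proof. exact: measurable_int Z_int. Qed.

Let density0 : density set0 = 0.
Proof. by rewrite /density integral_set0. Qed.

Let density_ge0 A : 0 <= density A.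
Proof. by apply: integral_ge0 => w _; rewrite lee_fin. Qed.

Let density_sigma_additive : semi_sigma_additive density.
Proof. by apply: semi_sigma_additive_nng_induced => //= w; rewrite lee_fin. Qed.

HB.instance Definition _ := isMeasure.Build _ _ _ density
  density0 density_ge0 density_sigma_additive.

Let density_fin : fin_num_fun density.
Proof. by move=> A mA; apply: integrable_fin_num => //; exact: integrableS Z_int. Qed.

HB.instance Definition _ := @Measure_isFinite.Build _ _ _ density density_fin.

Definition density_measure : {finite_measure set T -> \bar R} := density.

Lemma density_dominates : density_measure `<< P.
Proof.
apply/null_content_dominatesP => A mA PA0.
by apply: null_set_integral => //; exact: measurable_funTS.
Qed.

Lemma ge0_integral_density (Y : T -> \bar R) : (forall w, 0 <= Y w) ->
  measurable_fun setT Y ->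
  \int[density_measure]_w Y w = \int[P]_w (Y w * (Z w)%:E).
Proof.
move=> Y_ge0 mY.
rewrite -(Radon_Nikodym_SigmaFinite.change_of_variables density_dominates) //.
have mRN : measurable_fun setT (Radon_Nikodym_SigmaFinite.f density_measure P).
  exact: measurable_int (Radon_Nikodym_SigmaFinite.f_integrable density_dominates).
apply: ae_eq_integral => //; [exact: emeasurable_funM|exact: emeasurable_funM|].
apply: ae_eqe_mul2l; apply: ae_eq_sym; apply: integral_ae_eq => //.
move=> E _ mE.
by rewrite -Radon_Nikodym_SigmaFinite.f_integral //; exact: density_dominates.
Qed.
End density.

Section sub_sigma_algebra.
Context {R : realType} {d : measure_display} {T : measurableType d}
  (G : set (set T)) (G_measurable : G `<=` measurable).
Local Notation TG := (g_sigma_algebraType G).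

Lemma sub_sigma_measurable (C : set TG) : measurable C -> measurable (C : set T).
Proof. by move: C; exact: smallest_sub (@sigma_algebra_measurable _ T) G_measurable. Qed.

Lemma measurable_id_sub_sigma : measurable_fun setT (id : T -> TG).
Proof. by move=> _ C mC; rewrite setTI; exact: sub_sigma_measurable. Qed.

Lemma measurable_fun_sub_sigma (f : TG -> \bar R) :
  measurable_fun setT f -> measurable_fun setT (f : T -> \bar R).
Proof. by move=> mf; exact: measurableT_comp mf measurable_id_sub_sigma. Qed.

Section restriction.
Variable mu : {finite_measure set T -> \bar R}.

Definition sub_sigma_restr := pushforward mu (id : T -> TG).

Let restr_measure : {measure set TG -> \bar R}.
Proof.
refine (pushforward mu (id : T -> TG) : measure TG R).
exact: measurable_id_sub_sigma.
Defined.

Let restr0 : sub_sigma_restr set0 = 0%E. Proof. exact: (measure0 restr_measure). Qed.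
Let restr_ge0 A : (0 <= sub_sigma_restr A)%E. Proof. exact: (measure_ge0 restr_measure A). Qed.
Let restr_sigma_additive : semi_sigma_additive sub_sigma_restr.
Proof. exact: (@measure_semi_sigma_additive _ _ _ restr_measure). Qed.
HB.instance Definition _ := isMeasure.Build _ _ _ sub_sigma_restr
  restr0 restr_ge0 restr_sigma_additive.

Let restr_fin : fin_num_fun sub_sigma_restr.
Proof. by move=> A mA; apply: (fin_num_measure mu); exact: sub_sigma_measurable. Qed.
HB.instance Definition _ := @Measure_isFinite.Build _ _ _ sub_sigma_restr restr_fin.

Definition sub_sigma_measure : {finite_measure set TG -> \bar R} := sub_sigma_restr.

Lemma ge0_integral_sub_sigma (D : set TG) (h : TG -> \bar R) : measurable D ->
  measurable_fun D h -> (forall x, (0 <= h x)%E) ->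
  (\int[sub_sigma_measure]_(x in D) h x = \int[mu]_(x in D) h x)%E.
Proof.
move=> mD mh h_ge0.
exact: (ge0_integral_pushforward measurable_id_sub_sigma mu mD mh (fun y _ => h_ge0 y)).
Qed.
End restriction.
End sub_sigma_algebra.

Section finite_measure_integrals.
Local Open Scope ereal_scope.
Context {R : realType} {d : measure_display} {T : measurableType d}
  (P : {finite_measure set T -> \bar R}).

Lemma integrable_bounded (f : T -> R) (M : R) :
  measurable_fun setT f -> (forall w, (`|f w| <= M)%R) ->
  P.-integrable setT (EFin \o f).
Proof.
move=> mf fM; apply/integrableP; split; first exact/measurable_EFinP.
apply: (@le_lt_trans _ _ (\int[P]_(w in setT) (cst M%:E) w)).
  apply: ge0_le_integral => //.
  - by apply/measurable_EFinP; apply: measurableT_comp.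
  - by move=> w _ /=; rewrite lee_fin.
by rewrite integral_cst //= ltey_eq fin_numM //; exact: fin_num_measure.
Qed.

Lemma integrable_bounded_addr (f : T -> R) (M : R) :
  measurable_fun setT f -> (forall w, (`|f w| <= M)%R) ->
  P.-integrable setT (EFin \o (fun w => f w + M)%R).
Proof.
move=> mf fM; apply: (integrable_bounded (M := M + M)); first exact: measurable_funD.
move=> w; rewrite (le_trans (ler_normD _ _)) // lerD // ger0_norm //.
exact: le_trans (fM w).
Qed.

Lemma integralB_cst (f : T -> R) (c : R) (B : set T) :
  measurable B -> P.-integrable setT (EFin \o f) ->
  \int[P]_(w in B) (f w - c)%:E = \int[P]_(w in B) (f w)%:E - c%:E * P B.
Proof.
move=> mB f_int; under eq_integral do rewrite EFinB.
rewrite (@integralB_EFin _ _ _ P B f (cst c) mB).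
- by rewrite -(integral_cst P mB c%:E).
- exact: integrableS f_int.
- exact: finite_measure_integrable_cst.
Qed.

Lemma integral_mul_eq_on_sigma (G : set (set T)) (G_measurable : G `<=` measurable)
    (Z V : T -> R) (Z_ge0 : forall w, (0 <= Z w)%R) (V_ge0 : forall w, (0 <= V w)%R)
    (Z_int : P.-integrable setT (EFin \o Z)) (V_int : P.-integrable setT (EFin \o V)) :
  (forall C, <<s G >> C -> \int[P]_(w in C) (Z w)%:E = \int[P]_(w in C) (V w)%:E) ->
  forall Y : g_sigma_algebraType G -> \bar R, (forall w, 0 <= Y w) ->
    measurable_fun setT Y ->
  \int[P]_w (Y w * (Z w)%:E) = \int[P]_w (Y w * (V w)%:E).
Proof.
move=> ZV Y Y_ge0 mY.
have mY' := measurable_fun_sub_sigma G_measurable mY.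
rewrite -(ge0_integral_density Z_ge0 Z_int Y_ge0 mY').
rewrite -(ge0_integral_density V_ge0 V_int Y_ge0 mY').
rewrite -!(ge0_integral_sub_sigma G_measurable) //.
by apply: eq_measure_integral => C mC _; exact: ZV.
Qed.
End finite_measure_integrals.

Section conditional_expectation.
Local Open Scope ereal_scope.
Context {R : realType} {d : measure_display} {T : measurableType d}
  (P : probability T R).

Lemma condexp_is_integral (G : set (set T)) (Z V : T -> R) (C : set T) :
  condexp_is P G Z V -> measurable_fun setT V -> G C -> measurable C ->
  \int[P]_(w in C) (Z w)%:E = \int[P]_(w in C) (V w)%:E.
Proof.
move=> [W [[_ W_int _ WZ] WV]] mV GC mC; rewrite -WZ //.
apply: ae_eq_integral => //.
- by apply: measurable_funTS; exact: measurable_int W_int.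
- by apply/measurable_EFinP; exact: measurable_funTS.
- by apply: filterS WV => x /= -> _.
Qed.

Lemma is_condexpB_cst (G : set (set T)) (G_measurable : G `<=` measurable)
    (Z W : T -> R) (c : R) :
  is_condexp P G Z W ->
  is_condexp P G (fun w => Z w - c)%R (fun w => W w - c)%R.
Proof.
move=> [Z_int W_int mW WZ].
have integrableB_cst (f : T -> R) : P.-integrable setT (EFin \o f) ->
    P.-integrable setT (EFin \o (fun w => f w - c)%R).
  move=> f_int; apply: (eq_integrable measurableT _ _ _
    (integrableB measurableT f_int (finite_measure_integrable_cst P c measurableT))).
  by move=> w _ /=; rewrite EFinB.
split; [exact: integrableB_cst|exact: integrableB_cst| |].
- move=> C mC; have mBc : measurable_fun setT (fun x : R => x - c)%R.
    exact: measurable_funB.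
  by have := mW _ (mBc measurableT C mC); rewrite setTI.
- move=> B GB; have mB := G_measurable _ GB.
  by rewrite !integralB_cst // WZ.
Qed.
End conditional_expectation.

Section condexp_existence.
Local Open Scope ereal_scope.
Context {R : realType} {d : measure_display} {T : measurableType d}
  (P : probability T R) (G : set (set T)) (G_measurable : G `<=` measurable).
Local Notation TG := (g_sigma_algebraType G).

(* The witness is the Radon-Nikodym derivative of [Z * P] with respect to [P],
   both restricted to the sub-sigma-algebra. *)
Lemma ge0_condexp_exists (Z : T -> R) (Z_ge0 : forall w, (0 <= Z w)%R) :
  P.-integrable setT (EFin \o Z) -> exists W, is_condexp P <<s G >> Z W.
Proof.
move=> Z_int.
pose PG := sub_sigma_measure G_measurable P.
pose nuG := sub_sigma_measure G_measurable (density_measure Z_ge0 Z_int).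
have dom : nuG `<< PG.
  apply/null_content_dominatesP => A mA PA0.
  move/null_content_dominatesP : (density_dominates Z_ge0 Z_int); apply.
  - exact: sub_sigma_measurable G_measurable _ mA.
  - exact: PA0.
pose g := Radon_Nikodym_SigmaFinite.f nuG PG.
have g_int := Radon_Nikodym_SigmaFinite.f_integrable dom.
have g_fin := Radon_Nikodym_SigmaFinite.f_fin_num dom.
have g_ge0 := Radon_Nikodym_SigmaFinite.f_ge0 dom.
have mg : measurable_fun setT g := measurable_int PG g_int.
have g_intP : P.-integrable setT (g : T -> \bar R).
  apply/integrableP; split; first exact: measurable_fun_sub_sigma.
  rewrite -(ge0_integral_sub_sigma G_measurable) //; last exact: measurableT_comp.
  by case/integrableP : g_int.
exists (fun w => fine (g w)); split => //.
- by apply: (eq_integrable measurableT _ _ _ g_intP) => w _ /=; rewrite fineK.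
- move=> C mC.
  have := measurableT_comp (fine_measurable measurableT) mg measurableT mC.
  by rewrite setTI.
- move=> B GB; rewrite -[RHS]/(density P Z B).
  transitivity (\int[P]_(w in B) g w); first by apply: eq_integral => w _; rewrite fineK.
  rewrite -(ge0_integral_sub_sigma G_measurable P GB (measurable_funTS mg)) //.
  by rewrite -Radon_Nikodym_SigmaFinite.f_integral.
Qed.

Lemma condexp_exists (Z : T -> R) (M : R) : measurable_fun setT Z ->
  (forall w, (`|Z w| <= M)%R) -> exists W, is_condexp P <<s G >> Z W.
Proof.
move=> mZ ZM.
have ZM_ge0 w : (0 <= Z w + M)%R by exact: norm_le_addr_ge0.
have [W ZMW] := ge0_condexp_exists ZM_ge0 (integrable_bounded_addr P mZ ZM).
exists (fun w => W w - M)%R.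
have := @is_condexpB_cst _ _ _ P <<s G >> (sub_sigma_measurable G_measurable) _ _ M ZMW.
by congr is_condexp; apply/funext => w; rewrite addrK.
Qed.

Lemma condexp_eq_of_integrals (Z1 Z2 : T -> R) (M : R) :
  measurable_fun setT Z1 -> measurable_fun setT Z2 ->
  (forall w, (`|Z1 w| <= M)%R) -> (forall w, (`|Z2 w| <= M)%R) ->
  (forall B, <<s G >> B ->
    \int[P]_(w in B) (Z1 w)%:E = \int[P]_(w in B) (Z2 w)%:E) ->
  condexp_eq P <<s G >> Z1 Z2.
Proof.
move=> mZ1 mZ2 Z1M Z2M Z12.
have [W [_ W_int mW WZ2]] := condexp_exists mZ2 Z2M.
exists W, W; split; last exact: aeW.
- split => //; first exact: integrable_bounded Z1M.
  by move=> B GB; rewrite WZ2 // Z12.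
- by split => //; exact: integrable_bounded Z2M.
Qed.
End condexp_existence.

Section setI_integral_comp.
Local Open Scope ereal_scope.
Context {R : realType} {d dX : measure_display} {T : measurableType d}
  {X : measurableType dX} (P : {finite_measure set T -> \bar R})
  (B : set T) (mB : measurable B).

Let indicB_ge0 w : (0 <= \1_B w :> R)%R. Proof. by rewrite indicE. Qed.
Let indicB_int : P.-integrable setT (EFin \o \1_B).
Proof. exact: integrable_indic. Qed.

Local Notation PB := (density_measure indicB_ge0 indicB_int).

Lemma density_indicE (A : set T) : measurable A -> PB A = P (B `&` A).
Proof. by move=> mA; rewrite /= /density integral_indic // setIC. Qed.

Lemma ge0_setI_integral_comp (phi : T -> X) (g : X -> \bar R) :
  measurable_fun setT phi -> measurable_fun setT g -> (forall x, 0 <= g x) ->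
  \int[P]_(w in B) g (phi w) = \int[pushforward PB phi]_x g x.
Proof.
move=> mphi mg g_ge0.
rewrite (ge0_integral_pushforward mphi PB measurableT mg (fun x _ => g_ge0 x)) /=.
rewrite -{1}(setTI B) integral_mkcondr epatch_indic.
rewrite ge0_integral_density //; exact: measurableT_comp.
Qed.

Lemma setI_integral_comp_eq (phi psi : T -> X) (f : X -> R) (M : R) :
  measurable_fun setT phi -> measurable_fun setT psi ->
  (forall A, measurable A -> P (B `&` phi @^-1` A) = P (B `&` psi @^-1` A)) ->
  measurable_fun setT f -> (forall x, (`|f x| <= M)%R) ->
  \int[P]_(w in B) (f (phi w))%:E = \int[P]_(w in B) (f (psi w))%:E.
Proof.
move=> mphi mpsi phi_psi mf fM.
have fM_ge0 x : (0 <= f x + M)%R by exact: norm_le_addr_ge0.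
have shift (chi : T -> X) : measurable_fun setT chi ->
    \int[P]_(w in B) (f (chi w))%:E =
    \int[pushforward PB chi]_x (f x + M)%:E - M%:E * P B.
  move=> mchi; rewrite -ge0_setI_integral_comp //; last first.
    by apply/measurable_EFinP; exact: measurable_funD.
  rewrite -integralB_cst //; last first.
    exact: integrable_bounded_addr (measurableT_comp mf mchi) (fun w => fM (chi w)).
  by apply: eq_integral => w _; rewrite addrK.
rewrite shift // shift //; congr (_ - _).
apply: eq_measure_integral => A mA _.
have mpre (chi : T -> X) : measurable_fun setT chi -> measurable (chi @^-1` A).
  by move=> mchi; rewrite -[X in measurable X]setTI; exact: mchi.
change (PB (phi @^-1` A) = PB (psi @^-1` A)).
by rewrite !density_indicE ?(phi_psi _ mA) //; exact: mpre.
Qed.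
End setI_integral_comp.

Section cylinder.
Context {d dX : measure_display} {Omega : measurableType d} {X : measurableType dX}
  (Xs : nat -> Omega -> X).

Definition cylinder (s : seq nat) (As : nat -> set X) : set Omega :=
  [set w | forall i, i \in s -> As i (Xs i w)].

Lemma cylinder_nil As : cylinder [::] As = setT.
Proof. by apply/seteqP; split => w //= _ i. Qed.

Lemma cylinder_cons i s As :
  cylinder (i :: s) As = Xs i @^-1` As i `&` cylinder s As.
Proof.
apply/seteqP; split => w /=.
- by move=> h; split => [|l ls]; apply: h; rewrite inE ?eqxx ?ls ?orbT.
- by move=> [Ai h] l; rewrite inE => /orP[/eqP->//|]; exact: h.
Qed.

Lemma eq_cylinder s As Bs : {in s, As =1 Bs} -> cylinder s As = cylinder s Bs.
Proof.
by move=> AB; apply/seteqP; split => w /= h i si; [rewrite -AB|rewrite AB] => //; exact: h.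
Qed.

Lemma cylinderI s As Bs :
  cylinder s As `&` cylinder s Bs = cylinder s (fun i => As i `&` Bs i).
Proof.
apply/seteqP; split => w /=; first by move=> [hA hB] i si; split; [exact: hA|exact: hB].
by move=> h; split => i si; have [] := h i si.
Qed.

Lemma indic_cylinder {R : realType} s As w :
  \1_(cylinder s As) w = \prod_(i <- s) \1_(As i) (Xs i w) :> R.
Proof.
elim: s => [|i s IH]; first by rewrite cylinder_nil big_nil indicT.
by rewrite cylinder_cons indicI /= big_cons IH !indicE.
Qed.

Hypothesis mXs : forall n, measurable_fun setT (Xs n).

Lemma measurable_preimage n A : measurable A -> measurable (Xs n @^-1` A).
Proof. by move=> mA; rewrite -[X in measurable X]setTI; exact: mXs. Qed.

Lemma measurable_cylinder s As : (forall i, measurable (As i)) ->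
  measurable (cylinder s As).
Proof.
move=> mAs; elim: s => [|i s IH]; first by rewrite cylinder_nil.
by rewrite cylinder_cons; apply: measurableI => //; exact: measurable_preimage.
Qed.

Lemma sigma_X_measurable n : sigma_X Xs n `<=` measurable.
Proof.
apply: smallest_sub; first exact: sigma_algebra_measurable.
by move=> _ [i [A [_ mA ->]]]; exact: measurable_preimage.
Qed.

Definition cylinders n : set (set Omega) :=
  [set cylinder (iota 0 n) As | As in [set As | forall i, measurable (As i)]].

Lemma sigma_X_sub_cylinders n : sigma_X Xs n `<=` <<s cylinders n >>.
Proof.
apply: smallest_sub; first exact: smallest_sigma_algebra.
move=> _ [i [A [i_lt mA ->]]]; apply: sub_sigma_algebra.
exists (fun l => if l == i then A else setT); first by move=> l; case: ifP.
apply/seteqP; split => w /=.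
- by move=> h; have := h i; rewrite mem_iota i_lt eqxx; apply.
- by move=> Ai l _; case: ifPn => [/eqP->|].
Qed.
End cylinder.

Lemma fine_probability_ge0 {R : realType} {d : measure_display} {X : measurableType d}
  (mu : probability X R) A : 0 <= fine (mu A).
Proof. exact/fine_ge0/measure_ge0. Qed.

Lemma norm_fine_probability_le1 {R : realType} {d : measure_display}
  {X : measurableType d} (mu : probability X R) A : measurable A -> `|fine (mu A)| <= 1.
Proof.
move=> mA; rewrite ger0_norm ?fine_probability_ge0 //.
have := measure_ge0 mu A; have := probability_le1 mu mA.
by case: (mu A) => //= r; rewrite !lee_fin.
Qed.

Section mixture_of_martingale_laws.
Context {R : realType} {d dX : measure_display} {Omega : measurableType d}
  (P : probability Omega R) {X : measurableType dX}
  (Xs : nat -> Omega -> X) (Fs : nat -> Omega -> probability X R).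
Hypothesis mXs : forall n, measurable_fun setT (Xs n).
Hypothesis mFs : forall n (A : set X), measurable A ->
  measurable_fun setT (fun w => Fs n w A).
Hypothesis Xs_cond_indep : forall (s : seq nat) (A : nat -> set X), uniq s ->
  (forall i, measurable (A i)) ->
  condexp_is P (sigma_F Fs setT)
    (fun w => \prod_(i <- s) (\1_(A i) (Xs i w) : R))
    (fun w => \prod_(i <- s) fine (Fs i w (A i))).
Hypothesis Fs_martingale : forall (n : nat) (A : set X), measurable A ->
  condexp_is P (sigma_F Fs [set i | (i <= n)%N])
    (fun w => fine (Fs n.+1 w A)) (fun w => fine (Fs n w A)).

Local Open Scope ereal_scope.

Definition prod_laws (s : seq nat) (As : nat -> set X) (w : Omega) : R :=
  \prod_(i <- s) fine (Fs i w (As i)).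

Lemma measurable_fine_Fs i A : measurable A ->
  measurable_fun setT (fun w => fine (Fs i w A)).
Proof. by move=> mA; exact: measurableT_comp (fine_measurable measurableT) (mFs i mA). Qed.

Lemma prob_cylinder s As : uniq s -> (forall i, measurable (As i)) ->
  P (cylinder Xs s As) = \int[P]_w (prod_laws s As w)%:E.
Proof.
move=> s_uniq mAs.
rewrite -(setIT (cylinder Xs s As)) -integral_indic //; last exact: measurable_cylinder.
under eq_integral do rewrite indic_cylinder.
apply: (condexp_is_integral (Xs_cond_indep s_uniq mAs)) => //.
  by apply: measurable_prod => i _; exact: measurable_fine_Fs.
apply: sub_sigma_algebra; exists 0%N, setT, setT.
by split => //; rewrite preimage_setT.
Qed.

Lemma prob_cylinderI_preimage s j As A : uniq s -> j \notin s ->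
  (forall i, measurable (As i)) -> measurable A ->
  P (cylinder Xs s As `&` Xs j @^-1` A) =
  \int[P]_w (prod_laws s As w * fine (Fs j w A))%:E.
Proof.
move=> s_uniq j_s mAs mA.
pose As' i := if i == j then A else As i.
have As'E : {in s, As' =1 As}.
  by move=> i i_s; rewrite /As' ifN //; apply: contraNneq j_s => <-.
have As'j : As' j = A by rewrite /As' eqxx.
rewrite setIC -[X in _ `&` X](eq_cylinder Xs As'E) -[in Xs j @^-1` A]As'j.
rewrite -cylinder_cons prob_cylinder /= ?j_s //; last by move=> i; rewrite /As'; case: ifP.
apply: eq_integral => w _; rewrite /prod_laws big_cons mulrC As'j.
by congr (_ * _)%:E; apply: eq_big_seq => i /As'E ->.
Qed.

Lemma martingale_step s j As A : {in s, forall i, (i <= j)%N} ->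
  (forall i, measurable (As i)) -> measurable A ->
  \int[P]_w (prod_laws s As w * fine (Fs j.+1 w A))%:E =
  \int[P]_w (prod_laws s As w * fine (Fs j w A))%:E.
Proof.
move=> s_le mAs mA.
pose gen := [set B | exists i (A0 : set X) (C : set (\bar R)),
  [/\ [set i | (i <= j)%N] i, measurable A0, measurable C &
      B = (fun w => Fs i w A0) @^-1` C]].
have gen_measurable : gen `<=` measurable.
  move=> _ [i [A0 [C [_ mA0 mC ->]]]].
  by have := mFs i mA0 measurableT mC; rewrite setTI.
have mY : measurable_fun (setT : set (g_sigma_algebraType gen))
    (fun w => (prod_laws s As w)%:E).
  apply/measurable_EFinP; apply: measurable_prod => i i_s.
  apply: measurableT_comp (fine_measurable measurableT) _ => _ C mC.
  rewrite setTI; apply: sub_sigma_algebra; exists i, (As i), C.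
  by split => //; exact: s_le.
have mfine i : measurable_fun setT (fun w => fine (Fs i w A)).
  exact: measurable_fine_Fs.
under eq_integral do rewrite EFinM.
under [RHS]eq_integral do rewrite EFinM.
apply: (integral_mul_eq_on_sigma gen_measurable) => //.
- by move=> w; exact: fine_probability_ge0.
- by move=> w; exact: fine_probability_ge0.
- by apply: integrable_bounded (mfine _) _ => w; exact: norm_fine_probability_le1.
- by apply: integrable_bounded (mfine _) _ => w; exact: norm_fine_probability_le1.
- move=> C GC; apply: (condexp_is_integral (Fs_martingale j mA)) => //.
  exact: sub_sigma_measurable gen_measurable _ GC.
- by move=> w; rewrite lee_fin; apply: prodr_ge0 => i _; exact: fine_probability_ge0.
Qed.

Lemma martingale_chain s n k As A : {in s, forall i, (i <= n)%N} ->
  (forall i, measurable (As i)) -> measurable A ->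
  \int[P]_w (prod_laws s As w * fine (Fs (n + k) w A))%:E =
  \int[P]_w (prod_laws s As w * fine (Fs n w A))%:E.
Proof.
move=> s_le mAs mA; elim: k => [|k IH]; first by rewrite addn0.
rewrite addnS martingale_step // => i /s_le i_le.
exact: leq_trans i_le (leq_addr _ _).
Qed.

Lemma cylinder_preimage_prob_eq s n m As A : uniq s -> {in s, forall i, (i < n)%N} ->
  (n <= m)%N -> (forall i, measurable (As i)) -> measurable A ->
  P (cylinder Xs s As `&` Xs m @^-1` A) = P (cylinder Xs s As `&` Xs n @^-1` A).
Proof.
move=> s_uniq s_lt nm mAs mA.
have notin_s j : (n <= j)%N -> j \notin s.
  by move=> nj; apply/negP => /s_lt; rewrite ltnNge nj.
rewrite !prob_cylinderI_preimage ?notin_s // -(subnKC nm).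
by apply: martingale_chain => // i /s_lt /ltnW.
Qed.

Lemma sigma_X_preimage_prob_eq n m A : (n <= m)%N -> measurable A ->
  forall B, sigma_X Xs n B -> P (B `&` Xs m @^-1` A) = P (B `&` Xs n @^-1` A).
Proof.
move=> nm mA B /sigma_X_sub_cylinders cylB.
pose cyls := cylinders Xs n.
have cyls_measurable : cyls `<=` measurable.
  by move=> _ [As mAs <-]; exact: measurable_cylinder.
have cylsT : cyls setT.
  by exists (fun _ => setT) => //; apply/seteqP; split => w //= _ i.
have cylsI : setI_closed cyls.
  move=> _ _ [As mAs <-] [Bs mBs <-]; rewrite cylinderI.
  by exists (fun i => As i `&` Bs i) => // i; exact: measurableI.
have := @g_sigma_algebra_measure_unique _ R Omega cyls cyls_measurable _ (fun _ => cylsT)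
  (bigcup_const _ _) (mrestr P (measurable_preimage mXs m mA))
  (mrestr P (measurable_preimage mXs n mA)) cylsI.
apply => //.
- move=> _ [As mAs <-]; rewrite /mrestr.
  by apply: cylinder_preimage_prob_eq => //; [exact: iota_uniq|move=> i; rewrite mem_iota].
- move=> _; rewrite /mrestr (le_lt_trans (probability_le1 P _)) ?ltry //.
  exact/measurableI/measurable_preimage.
Qed.
End mixture_of_martingale_laws.

Unset Implicit Arguments.

Theorem mainTheorem1 (R : realType) (d dX : measure_display)
  (Omega : measurableType d) (P : probability Omega R)
  (X : measurableType dX) (HX : polish_borel (R := R) X)
  (Xs : nat -> Omega -> X) (Fs : nat -> Omega -> probability X R)
  (mXs : forall n, measurable_fun setT (Xs n))
  (mFs : forall n (A : set X), measurable A ->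
           measurable_fun setT (fun w => Fs n w A))
  (* (i) conditionally on (F_n), the X_n are independent with laws F_n *)
  (Hcond : forall (s : seq nat) (A : nat -> set X), uniq s ->
     (forall i, measurable (A i)) ->
     condexp_is P (sigma_F Fs setT)
       (fun w => \prod_(i <- s) (\1_(A i) (Xs i w) : R))
       (fun w => \prod_(i <- s) fine (Fs i w (A i))))
  (* (ii) (F_n) is a measure-valued martingale w.r.t. its natural filtration *)
  (Hmart : forall (n : nat) (A : set X), measurable A ->
     condexp_is P (sigma_F Fs [set i | (i <= n)%N])
       (fun w => fine (Fs n.+1 w A)) (fun w => fine (Fs n w A))) :
  is_cid P Xs.
Proof.
move=> n k f k_gt0 mf [M fM].
have n_le : (n <= (n + k).-1)%N by rewrite -subn1 -addnBA // leq_addr.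
have sigma_X_gen_measurable : [set B | exists i (A : set X),
    [/\ (i < n)%N, measurable A & B = Xs i @^-1` A]] `<=` measurable.
  by move=> B GB; apply: (sigma_X_measurable mXs); apply: sub_sigma_algebra GB.
apply: (condexp_eq_of_integrals sigma_X_gen_measurable (M := M)).
- exact: measurableT_comp mf (mXs _).
- exact: measurableT_comp mf (mXs _).
- by move=> w; exact: fM.
- by move=> w; exact: fM.
move=> B GB.
apply: (setI_integral_comp_eq (sigma_X_measurable mXs GB) (mXs _) (mXs _) _ mf fM).
by move=> A mA; exact: (sigma_X_preimage_prob_eq mXs mFs Hcond Hmart n_le mA GB).
Qed.
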